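(* Let $F$ be a complete posheaf on a locale $X$. The following are equivalent: (1) $F$ is a complete Heyting sheaf, i.e. $sup_F\circ\mu_F=m_F\circ(1_F\times sup_F)$ as morphisms $F\times\mathbb{P}F\to F$. (2) Each $F(u)$, $u\in\mathcal{O}(X)$, is a complete Heyting algebra (frame), and for all $v\le u$ in $\mathcal{O}(X)$, $x\in F(u)$, $y\in F(v)$: $x\wedge l_{v,u}(y)=l_{v,u}(x|_v\wedge y)$, where $l_{v,u}:F(v)\to F(u)$ is the left adjoint of the restriction map $F(u)\to F(v)$.
   Context: Let $X$ be a locale with frame of opens $\mathcal{O}(X)$. A posheaf on $X$ is a sheaf of sets $F$ with (POS1) each $F(u)$ a poset; (POS2) restriction maps $F(u)\to F(v)$, $x\mapsto x|_v$ ($v\le u$), order-preserving; (POS3) if $u=\bigvee_i u_i$ and $s,t\in F(u)$ satisfy $s|_{u_i}\le t|_{u_i}$ for all $i$, then $s\le t$. A posheaf $F$ is complete iff every $F(u)$ is a complete lattice and every restriction map $F(u)\to F(v)$ ($v\le u$) is surjective and has both a left and a right adjoint (equivalently, the principal ideal embedding into the sheaf of downsheaves has a left adjoint, adjointness taken with respect to the order on points $x\in F(u)$, $y\in F(w)$: $x\le y$ iff $u\le w$ and $x\le y|_u$). $\mathbb{P}F$ is the sheaf with $\mathbb{P}F(u)$ the set of subsheaves of $F^u$ (the restriction of $F$ to $\downarrow u$), with restriction $S\mapsto S^v$. For complete $F$, $sup_F:\mathbb{P}F\to F$ sends $S\in\mathbb{P}F(u)$ to the least $z\in F(u)$ with $S(v)\subseteq\{y\in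 F(v)\mid y\le z|_v\}$ for all $v\le u$. $m_F:F\times F\to F$ is the componentwise binary meet $(x,y)\mapsto x\wedge y$ in $F(u)$ (the right adjoint of the diagonal). $\mu_F:F\times\mathbb{P}F\to\mathbb{P}F$ sends $(x,S)$, $x\in F(u)$, $S\in\mathbb{P}F(u)$, to the subsheaf of $F^u$ generated by the presheaf $v\mapsto\{x|_v\wedge y\mid y\in S(v)\}$, $v\le u$. *)

From Stdlib Require Import Classical ProofIrrelevance.
Set Implicit Arguments.
Unset Strict Implicit.

(** * Frames (= locales, identified with their frame of opens O(X)) *)
Record Frame := {
  O :> Type;
  ole : O -> O -> Prop;
  ojoin : (O -> Prop) -> O;
  omeet : O -> O -> O;
  ole_refl : forall a, ole a a;
  ole_trans : forall a b c, ole a b -> ole b c -> ole a c;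
  ole_antisym : forall a b, ole a b -> ole b a -> a = b;
  ojoin_ub : forall S a, S a -> ole a (ojoin S);
  ojoin_least : forall S b, (forall a, S a -> ole a b) -> ole (ojoin S) b;
  omeet_lb1 : forall a b, ole (omeet a b) a;
  omeet_lb2 : forall a b, ole (omeet a b) b;
  omeet_glb : forall a b c, ole c a -> ole c b -> ole c (omeet a b);
  odistr : forall a S,
    omeet a (ojoin S) = ojoin (fun c => exists s, S s /\ c = omeet a s)
}.

Definition fam_join (X : Frame) (I : Type) (f : I -> X) : X :=
  @ojoin X (fun c => exists i, c = f i).

Record Sheaf (X : Frame) := {
  sec :> X -> Type;
  res : forall u v : X, ole v u -> sec u -> sec v;
  res_id : forall (u : X) (h : ole u u) (x : sec u), res h x = x;
  res_comp : forall (u v w : X) (h1 : ole v u) (h2 : ole w v)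
      (h3 : ole w u) (x : sec u), res h2 (res h1 x) = res h3 x;
  sh_locality : forall (u : X) (I : Type) (ui : I -> X), u = fam_join ui ->
      forall x y : sec u,
      (forall i (h : ole (ui i) u), res h x = res h y) ->
      x = y;
  sh_gluing : forall (u : X) (I : Type) (ui : I -> X), u = fam_join ui ->
      forall s : forall i, sec (ui i),
      (forall i j (h1 : ole (omeet (ui i) (ui j)) (ui i))
                  (h2 : ole (omeet (ui i) (ui j)) (ui j)),
         res h1 (s i) = res h2 (s j)) ->
      exists x : sec u, forall i (h : ole (ui i) u), res h x = s i
}.

Record Posheaf (X : Frame) := {
  psh :> Sheaf X;
  ple : forall u : X, psh u -> psh u -> Prop;
  ple_refl : forall u (x : psh u), ple x x;
  ple_trans : forall u (x y z : psh u), ple x y -> ple y z -> ple x z;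
  ple_antisym : forall u (x y : psh u), ple x y -> ple y x -> x = y;
  res_mono : forall (u v : X) (h : ole v u) (x y : psh u),
      ple x y -> ple (res h x) (res h y);
  pos3 : forall (u : X) (I : Type) (ui : I -> X), u = fam_join ui ->
      forall s t : psh u,
      (forall i (h : ole (ui i) u), ple (res h s) (res h t)) ->
      ple s t
}.

(** * Complete posheaves: every F(u) a complete lattice (given by arbitrary
    infima), every restriction surjective with a left and a right adjoint. *)
Record CompletePosheaf (X : Frame) := {
  cpos :> Posheaf X;
  cinf : forall u : X, (cpos u -> Prop) -> cpos u;
  cinf_lb : forall u (S : cpos u -> Prop) x, S x -> ple (cinf S) x;
  cinf_glb : forall u (S : cpos u -> Prop) y,
      (forall x, S x -> ple y x) -> ple y (cinf S);
  res_surj : forall (u v : X) (h : ole v u) (y : cpos v),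
      exists x : cpos u, res h x = y;
  ladj : forall u v : X, ole v u -> cpos v -> cpos u;
  ladj_spec : forall (u v : X) (h : ole v u) (y : cpos v) (x : cpos u),
      ple (ladj h y) x <-> ple y (res h x);
  radj : forall u v : X, ole v u -> cpos v -> cpos u;
  radj_spec : forall (u v : X) (h : ole v u) (x : cpos u) (y : cpos v),
      ple (res h x) y <-> ple x (radj h y)
}.

Section Ops.
Variables (X : Frame) (F : CompletePosheaf X).

Definition cmeet (u : X) (x y : F u) : F u := cinf (fun z => z = x \/ z = y).

Definition cjoin (u : X) (S : F u -> Prop) : F u :=
  cinf (fun z => forall x, S x -> ple x z).

Definition is_frame_at (u : X) : Prop :=
  forall (x : F u) (S : F u -> Prop),
    cmeet x (cjoin S) = cjoin (fun c => exists y, S y /\ c = cmeet x y).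

(** S is a subsheaf of F^u (the restriction of F to the down-set of u);
    S v is only inhabited for v <= u. Elements of PF(u) are such S. *)
Definition is_subsheaf (u : X) (S : forall v : X, F v -> Prop) : Prop :=
  (forall v y, S v y -> ole v u) /\
  (forall (v w : X) (h : ole w v) (y : F v), S v y -> S w (res h y)) /\
  (forall (v : X) (I : Type) (vi : I -> X), ole v u -> v = fam_join vi ->
     forall y : F v,
     (forall i (h : ole (vi i) v), S (vi i) (res h y)) -> S v y).

Definition gen_subsheaf (u : X) (P : forall v : X, F v -> Prop)
  : forall v : X, F v -> Prop :=
  fun v y => ole v u /\
    forall T, is_subsheaf u T -> (forall w z, P w z -> T w z) -> T v y.

Definition muF (u : X) (x : F u) (S : forall v : X, F v -> Prop)
  : forall v : X, F v -> Prop :=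
  gen_subsheaf u (fun v z =>
     exists (h : ole v u) (y : F v), S v y /\ z = cmeet (res h x) y).

Definition supF (u : X) (S : forall v : X, F v -> Prop) : F u :=
  cinf (fun z : F u => forall (v : X) (h : ole v u) (y : F v),
          S v y -> ple y (res h z)).

End Ops.

Arguments cmeet {X} F u x y.
Arguments cjoin {X} F u S.
Arguments is_frame_at {X} F u.
Arguments is_subsheaf {X} F u S.
Arguments gen_subsheaf {X} F u P v y.
Arguments muF {X} F u x S v y.
Arguments supF {X} F u S.
Arguments ladj {X} c {u v} _ _.

From Corelib Require Import ssreflect.
Set Implicit Arguments.
Unset Strict Implicit.

(* sup_F only sees upper bounds, and for fixed x, z in F(u) the sections s with
   x|_w /\ s <= z|_w form a subsheaf of F^u (by POS3).  Hence passing to a generated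
   subsheaf changes neither sup_F S nor sup_F (mu_F (x, S)), and sup_F S is the join
   in F(u) of the l_{v,u} y, y in S(v).  For S generated by the restrictions of a
   family T in F(v) one gets sup_F S = l_{v,u} (\/ T), so the sup equation reads
   x /\ l_{v,u} (\/ T) = l_{v,u} (\/ {x|_v /\ t | t in T}): for v = u this is the
   infinite distributive law, for T a singleton the Frobenius identity.  Conversely,
   these two laws evaluate sup_F (mu_F (x, S)) through the join formula. *)

Section CompletePosheafTheory.
Variables (X : Frame) (F : CompletePosheaf X).

Lemma res_irrelevant (u v : X) (h h' : ole v u) (x : F u) : res h x = res h' x.
Proof. by rewrite -(res_comp h (ole_refl v) h' x) res_id. Qed.

Lemma ple_ext (u : X) (a b : F u) : (forall z, ple a z <-> ple b z) -> a = b.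
Proof. by move=> H; apply: ple_antisym; [apply/H | apply/H]; apply: ple_refl. Qed.

Lemma le_cmeet (u : X) (x y w : F u) :
  ple w (cmeet F u x y) <-> ple w x /\ ple w y.
Proof.
split.
- by move=> H; split; apply: ple_trans H _; apply: cinf_lb; auto.
- by move=> [Hx Hy]; apply: cinf_glb => z [->| ->].
Qed.

Lemma cmeet_lel (u : X) (x y : F u) : ple (cmeet F u x y) x.
Proof. by apply: cinf_lb; left. Qed.

Lemma cmeet_ler (u : X) (x y : F u) : ple (cmeet F u x y) y.
Proof. by apply: cinf_lb; right. Qed.

Lemma cjoin_le (u : X) (S : F u -> Prop) (z : F u) :
  ple (cjoin F u S) z <-> (forall x, S x -> ple x z).
Proof.
split; last by move=> H; apply: cinf_lb.
by move=> H x Sx; apply: ple_trans H; apply: cinf_glb => y; apply.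
Qed.

Lemma eq_cjoin (u : X) (S S' : F u -> Prop) :
  (forall c, S c <-> S' c) -> cjoin F u S = cjoin F u S'.
Proof.
move=> E; apply: ple_ext => z; rewrite !cjoin_le.
by split=> H c Sc; apply: H; apply/E.
Qed.

Lemma cjoin1 (u : X) (S : F u -> Prop) (a : F u) :
  (forall c, S c <-> c = a) -> cjoin F u S = a.
Proof.
move=> E; apply: ple_ext => z; rewrite cjoin_le.
split; first by apply; apply/E.
by move=> H c /E ->.
Qed.

Lemma ladj_id (u : X) (h : ole u u) (y : F u) : ladj F h y = y.
Proof. by apply: ple_ext => z; rewrite ladj_spec res_id. Qed.

Lemma res_cmeet (u v : X) (h : ole v u) (x y : F u) :
  res h (cmeet F u x y) = cmeet F v (res h x) (res h y).
Proof.
apply: ple_antisym.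
- by apply/le_cmeet; split; apply: res_mono; [apply: cmeet_lel | apply: cmeet_ler].
- apply/ladj_spec/le_cmeet.
  by split; apply/ladj_spec; [apply: cmeet_lel | apply: cmeet_ler].
Qed.

Definition bounded_by (u : X) (phi : forall v : X, ole v u -> F v -> F v)
    (S : forall v : X, F v -> Prop) (z : F u) : Prop :=
  forall v (h : ole v u) y, S v y -> ple (phi v h y) (res h z).

Definition upper_bound (u : X) := @bounded_by u (fun _ _ y => y).

Definition res_natural (u : X) (phi : forall v : X, ole v u -> F v -> F v) :=
  forall v w (hv : ole v u) (hw : ole w u) (h : ole w v) (y : F v),
    res h (phi v hv y) = phi w hw (res h y).

Lemma res_natural_cmeet (u : X) (x : F u) :
  res_natural (fun v (h : ole v u) y => cmeet F v (res h x) y).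
Proof. by move=> v w hv hw h y; rewrite res_cmeet (res_comp hv h hw). Qed.

Lemma supF_le (u : X) (S : forall v : X, F v -> Prop) (z : F u) :
  ple (supF F u S) z <-> upper_bound S z.
Proof.
split; last by move=> H; apply: cinf_lb.
move=> H v h y Sy; apply/ladj_spec; apply: ple_trans H.
by apply: cinf_glb => w Hw; apply/ladj_spec; apply: Hw.
Qed.

Lemma supF_eq_cjoin_ladj (u : X) (S : forall v : X, F v -> Prop) :
  supF F u S = cjoin F u (fun q => exists v (h : ole v u) y, S v y /\ q = ladj F h y).
Proof.
apply: ple_ext => z; rewrite supF_le cjoin_le; split.
- by move=> H _ [v [h [y [Sy ->]]]]; apply/ladj_spec/H.
- by move=> H v h y Sy; apply/ladj_spec/H; exists v, h, y.
Qed.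

Lemma gen_subsheaf_is_subsheaf (u : X) (P : forall v : X, F v -> Prop) :
  is_subsheaf F u (gen_subsheaf F u P).
Proof.
split; [|split].
- by move=> v y [].
- move=> v w h y [Hv Hg]; split; first exact: ole_trans h Hv.
  move=> T HT HP; have [_ [HTres _]] := HT.
  by apply: HTres; apply: Hg.
- move=> v I vi Hv Hj y Hi; split=> // T HT HP; have [_ [_ HTglue]] := HT.
  by apply: (HTglue v I vi Hv Hj y) => i h; apply: (proj2 (Hi i h)).
Qed.

Lemma is_subsheaf_bounded (u : X) (phi : forall v : X, ole v u -> F v -> F v)
    (z : F u) :
  res_natural phi ->
  is_subsheaf F u (fun w s => ole w u /\ forall h : ole w u, ple (phi w h s) (res h z)).
Proof.
move=> Nphi; split; [|split].
- by move=> w s [].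
- move=> a b hab s [Ha Hs]; have Hb := ole_trans hab Ha; split=> // h.
  by rewrite -(Nphi a b Ha) -(res_comp Ha hab h z); apply/res_mono/Hs.
- move=> a I ai Ha Hj s Hi; split=> // h; apply: (pos3 Hj) => i hi.
  have hu := ole_trans hi h.
  by rewrite (Nphi a _ h hu) (res_comp h hi hu z); apply: (proj2 (Hi i hi)).
Qed.

Lemma bounded_by_gen_subsheaf (u : X) (phi : forall v : X, ole v u -> F v -> F v)
    (P : forall v : X, F v -> Prop) (z : F u) :
  (forall v y, P v y -> ole v u) -> res_natural phi ->
  bounded_by phi (gen_subsheaf F u P) z <-> bounded_by phi P z.
Proof.
move=> HP Nphi; split.
- by move=> H v h y Py; apply: H; split=> // T _; apply.
- move=> H v h y [_ Hg]; apply: (proj2 (Hg _ (is_subsheaf_bounded z Nphi) _)).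
  by move=> w s Ps; split; [exact: HP Ps | move=> hw; apply: H].
Qed.

Lemma supF_gen_subsheaf (u : X) (P : forall v : X, F v -> Prop) :
  (forall v y, P v y -> ole v u) -> supF F u (gen_subsheaf F u P) = supF F u P.
Proof.
move=> HP; apply: ple_ext => z; rewrite !supF_le.
by apply: bounded_by_gen_subsheaf.
Qed.

Definition meet_image (u : X) (x : F u) (S : forall v : X, F v -> Prop)
    (v : X) (c : F v) : Prop :=
  exists (h : ole v u) (y : F v), S v y /\ c = cmeet F v (res h x) y.
Arguments meet_image {u} x S v c.

Lemma supF_muF (u : X) (x : F u) (S : forall v : X, F v -> Prop) :
  supF F u (muF F u x S) = supF F u (meet_image x S).
Proof. by apply: supF_gen_subsheaf => v c []. Qed.

Lemma upper_bound_meet_image (u : X) (x : F u) (S : forall v : X, F v -> Prop)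
    (z : F u) :
  upper_bound (meet_image x S) z <->
  bounded_by (fun v (h : ole v u) y => cmeet F v (res h x) y) S z.
Proof.
split; first by move=> H v h y Sy; apply: H; exists h, y.
by move=> H v h _ [h' [y [Sy ->]]]; rewrite (res_irrelevant h' h); apply: H.
Qed.

Lemma supF_meet_image_gen (u : X) (x : F u) (P : forall v : X, F v -> Prop) :
  (forall v y, P v y -> ole v u) ->
  supF F u (meet_image x (gen_subsheaf F u P)) = supF F u (meet_image x P).
Proof.
move=> HP; apply: ple_ext => z; rewrite !supF_le !upper_bound_meet_image.
exact: bounded_by_gen_subsheaf HP (res_natural_cmeet x).
Qed.

Definition down_image (v : X) (T : F v -> Prop) (w : X) (s : F w) : Prop :=
  exists (hw : ole w v) (t : F v), T t /\ s = res hw t.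
Arguments down_image {v} T w s.

Lemma supF_down_image (u v : X) (h : ole v u) (T : F v -> Prop) :
  supF F u (down_image T) = ladj F h (cjoin F v T).
Proof.
apply: ple_ext => z; rewrite supF_le ladj_spec cjoin_le; split.
- by move=> H t Tt; rewrite -(res_id (ole_refl v) t); apply: H; exists (ole_refl v), t.
- move=> H w hw _ [hwv [t [Tt ->]]].
  by rewrite -(res_comp h hwv hw z); apply/res_mono/H.
Qed.

Lemma supF_meet_image_down (u v : X) (h : ole v u) (x : F u) (T : F v -> Prop) :
  supF F u (meet_image x (down_image T)) =
  supF F u (down_image (fun c => exists t, T t /\ c = cmeet F v (res h x) t)).
Proof.
apply: ple_ext => z; rewrite !supF_le upper_bound_meet_image; split.
- move=> H w hw _ [hwv [_ [[t [Tt ->]] ->]]].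
  rewrite res_cmeet (res_comp h hwv hw x); apply: H; exists hwv, t; split=> //.
- move=> H w hw _ [hwv [t [Tt ->]]]; rewrite -(res_comp h hwv hw x) -res_cmeet.
  by apply: H; exists hwv, (cmeet F v (res h x) t); split=> //; exists t.
Qed.

Lemma sup_equation_down_image (u v : X) (h : ole v u) (x : F u) (T : F v -> Prop) :
  supF F u (muF F u x (gen_subsheaf F u (down_image T))) =
    cmeet F u x (supF F u (gen_subsheaf F u (down_image T))) ->
  cmeet F u x (ladj F h (cjoin F v T)) =
    ladj F h (cjoin F v (fun c => exists t, T t /\ c = cmeet F v (res h x) t)).
Proof.
have Hdown : forall w s, down_image T w s -> ole w u.
  by move=> w s [hw _]; exact: ole_trans hw h.
rewrite supF_muF supF_meet_image_gen // supF_meet_image_down.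
by rewrite !supF_gen_subsheaf // !(supF_down_image h) => ->.
Qed.

End CompletePosheafTheory.

Arguments sup_equation_down_image {X F u v} h x T _.

Theorem proposition3p7 (X : Frame) (F : CompletePosheaf X) :
  (forall (u : X) (x : F u) (S : forall v : X, F v -> Prop),
      is_subsheaf F u S ->
      supF F u (muF F u x S) = cmeet F u x (supF F u S))
  <->
  ((forall u : X, is_frame_at F u) /\
   (forall (u v : X) (h : ole v u) (x : F u) (y : F v),
      cmeet F u x (ladj F h y) = ladj F h (cmeet F v (res h x) y))).
Proof.
split.
- move=> Hsup; split.
  + move=> u x T; have := sup_equation_down_image (ole_refl u) x T.
    rewrite !ladj_id res_id; apply; apply: Hsup; exact: gen_subsheaf_is_subsheaf.
  + move=> u v h x y; have := sup_equation_down_image h x (fun t => t = y).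
    rewrite (cjoin1 (a := y)) // (cjoin1 (a := cmeet F v (res h x) y)).
    * by move=> c; split=> [[t [-> ->]] | ->] //; exists y.
    * apply; apply: Hsup; exact: gen_subsheaf_is_subsheaf.
- move=> [Hframe Hfrob] u x S _.
  rewrite supF_muF !supF_eq_cjoin_ladj Hframe; apply: eq_cjoin => c; split.
  + move=> [v [h [_ [[h' [y [Sy ->]]] ->]]]]; rewrite (res_irrelevant h' h) -Hfrob.
    by exists (ladj F h y); split=> //; exists v, h, y.
  + move=> [_ [[v [h [y [Sy ->]]]] ->]]; rewrite Hfrob.
    by exists v, h, (cmeet F v (res h x) y); split=> //; exists h, y.
Qed.
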